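(* Consider a neutral evolutionary model on $N$ sites given by a replacement rule $p$ satisfying the fixation assumption described in the context. For any set $S\subseteq\{1,\ldots,N\}$ of sites, $\rho_S=\sum_{i\in S}\rho_i$. In particular, $\sum_{i=1}^N\rho_i=1$.
   Context: There are $N$ sites $1,\ldots,N$, each always occupied by one individual of type M (mutant) or R (resident); a state is $\mathbf{s}\in\{\mathrm{M},\mathrm{R}\}^N$. A replacement event is a pair $(R,\alpha)$ with $R\subseteq\{1,\ldots,N\}$ and $\alpha:R\to\{1,\ldots,N\}$. A replacement rule is a probability distribution $p(R,\alpha)$ on replacement events, independent of the state. The evolutionary Markov chain: at each time-step an event $(R,\alpha)$ is drawn with probability $p(R,\alpha)$ and the new state is $s_i'=s_i$ if $i\notin R$, $s_i'=s_{\alpha(i)}$ if $i\in R$. Fixation assumption: there exist a site $i$ and a finite sequence of replacement events, each of positive probability, such that if these events occur consecutively (from any initial state) every site ends up carrying the type initially at site $i$. For $S\subseteq\{1,\ldots,N\}$, $\rho_S=\lim_{t\to\infty}\Pr[\mathbf{s}(t)=(\mathrm{M},\ldots,\mathrm{M})]$ for the chain started from the state with M at the sites in $S$ and R at all other sites; $\rho_i=\rho_{\{i\}}$. *)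

From HB Require Import structures.
From mathcomp Require Import all_boot all_order all_algebra.
From mathcomp Require Import all_classical all_reals all_analysis.
Set Implicit Arguments. Unset Strict Implicit. Unset Printing Implicit Defensive.
Import Order.TTheory GRing.Theory Num.Theory.
Local Open Scope ring_scope.

(* Sites are 'I_N (site k+1 of the paper is ordinal k).
   A state assigns a type to each site: true = M (mutant), false = R (resident). *)
Definition state (N : nat) := {ffun 'I_N -> bool}.

(* A replacement event (R, alpha): R is a set of sites and alpha gives, for each
   i in R, the parent site alpha i.  alpha is stored as a total function on sites;
   its values outside R are irrelevant (never used). *)
Definition event (N : nat) := ({set 'I_N} * {ffun 'I_N -> 'I_N})%type.

Definition apply_event (N : nat) (e : event N) (s : state N) : state N :=
  [ffun i => if i \in e.1 then s (e.2 i) else s i].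

Definition replacement_rule (R : realType) (N : nat) (p : event N -> R) : Prop :=
  (forall e, 0 <= p e) /\ \sum_(e : event N) p e = 1.

Definition fixation_assumption (R : realType) (N : nat) (p : event N -> R) : Prop :=
  exists i : 'I_N, exists es : seq (event N),
    all (fun e => 0 < p e) es /\
    forall s : state N, foldl (fun s e => apply_event e s) s es = [ffun _ => s i].

Fixpoint distr (R : realType) (N : nat) (p : event N -> R) (s0 : state N) (t : nat)
  : state N -> R :=
  match t with
  | 0 => fun s => (s == s0)%:R
  | t'.+1 => fun s' =>
      \sum_(s : state N) distr p s0 t' s * \sum_(e : event N | apply_event e s == s') p e
  end.

Definition init_state (N : nat) (S : {set 'I_N}) : state N := [ffun i => i \in S].
Definition allM (N : nat) : state N := [ffun _ => true].

Definition fixprob_seq (R : realType) (N : nat) (p : event N -> R) (S : {set 'I_N})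
  : nat -> R := fun t => distr p (init_state S) t (allM N).

From HB Require Import structures.
From mathcomp Require Import all_boot all_order all_algebra.
From mathcomp Require Import all_classical all_reals all_analysis.
Set Implicit Arguments. Unset Strict Implicit. Unset Printing Implicit Defensive.
Import Order.TTheory GRing.Theory Num.Theory.
Import numFieldNormedType.Exports.
Local Open Scope classical_set_scope.
Local Open Scope ring_scope.

(* Read the genealogy backwards: site j at time t carries the initial type of its ancestor
   A_t(j), and the ancestor map evolves by the same random events, A_(t+1) = A_t o parent_e.
   Hence rho_S(t) = Pr[A_t(j) \in S for all j].  Coalesced ancestor maps (constant ones) stay
   coalesced, and the fixation sequence es makes every map coalesce within |es| steps with
   probability at least prod_(e in es) p(e) > 0, so the lineages coalesce almost surely, geometrically fast.  On
   the coalesced event [A_t maps into S] = sum_(i in S) [A_t maps into {i}], which gives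
   additivity in the limit; limits exist because [A_t maps into S] can only switch on. *)

Section RandomMapChain.
Variables (R : realType) (E T : finType) (p : E -> R) (f : E -> T -> T).

Fixpoint chain_distr (x : T) (t : nat) : T -> R :=
  match t with
  | 0 => fun y => (y == x)%:R
  | t'.+1 => fun y => \sum_(z : T) chain_distr x t' z * \sum_(e : E | f e z == y) p e
  end.

Definition expect (x : T) (t : nat) (h : T -> R) : R :=
  \sum_(y : T) chain_distr x t y * h y.

Lemma eq_expect x t h1 h2 : h1 =1 h2 -> expect x t h1 = expect x t h2.
Proof. by move=> eq_h; apply: eq_bigr => y _; rewrite eq_h. Qed.

Lemma expect0 x h : expect x 0 h = h x.
Proof.
rewrite /expect (bigD1 x) //= eqxx mul1r big1 ?addr0 // => y /negbTE->.
by rewrite mul0r.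
Qed.

Lemma expectS x t h :
  expect x t.+1 h = expect x t (fun y => \sum_(e : E) p e * h (f e y)).
Proof.
rewrite /expect /=; under eq_bigr do rewrite mulr_suml.
rewrite exchange_big /=; apply: eq_bigr => z _.
rewrite (partition_big (f^~ z) xpredT) //= mulr_sumr; apply: eq_bigr => y _.
by rewrite -mulrA mulr_suml; congr (_ * _); apply: eq_bigr => e /eqP->.
Qed.

Lemma expect1 x h : expect x 1 h = \sum_(e : E) p e * h (f e x).
Proof. by rewrite expectS expect0. Qed.

Lemma expectD x a b h : expect x (a + b) h = expect x a (fun y => expect y b h).
Proof.
elim: b h => [|b IHb] h; first by rewrite addn0; apply: eq_expect => y; rewrite expect0.
by rewrite addnS expectS IHb; apply: eq_expect => y; rewrite expectS.
Qed.

Lemma expect_eq1 x t z : expect x t (fun y => (y == z)%:R) = chain_distr x t z.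
Proof.
rewrite /expect (bigD1 z) //= eqxx mulr1 big1 ?addr0 // => y /negbTE->.
by rewrite mulr0.
Qed.

Lemma expectB x t h1 h2 :
  expect x t (fun y => h1 y - h2 y) = expect x t h1 - expect x t h2.
Proof. by rewrite /expect -sumrB; apply: eq_bigr => y _; rewrite mulrBr. Qed.

Lemma expect_sum (I : Type) (r : seq I) (P : pred I) x t (F : I -> T -> R) :
  expect x t (fun y => \sum_(i <- r | P i) F i y) = \sum_(i <- r | P i) expect x t (F i).
Proof. by rewrite /expect; under eq_bigr do rewrite mulr_sumr; rewrite exchange_big. Qed.

Hypothesis p_ge0 : forall e, 0 <= p e.

Lemma chain_distr_ge0 x t y : 0 <= chain_distr x t y.
Proof.
elim: t y => [|t IHt] y /=; first exact: ler0n.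
by apply: sumr_ge0 => z _; rewrite mulr_ge0 ?sumr_ge0.
Qed.

Lemma ler_expect x t h1 h2 :
  (forall y, h1 y <= h2 y) -> expect x t h1 <= expect x t h2.
Proof. by move=> le_h; apply: ler_sum => y _; rewrite ler_wpM2l ?chain_distr_ge0. Qed.

Lemma expect_ge0 x t h : (forall y, 0 <= h y) -> 0 <= expect x t h.
Proof. by move=> h_ge0; apply: sumr_ge0 => y _; rewrite mulr_ge0 ?chain_distr_ge0. Qed.

Lemma ler_norm_expect x t h g :
  (forall y, `|h y| <= g y) -> `|expect x t h| <= expect x t g.
Proof.
move=> le_hg; apply: le_trans (ler_norm_sum _ _ _) _; apply: ler_sum => y _.
by rewrite normrM ger0_norm ?chain_distr_ge0 // ler_wpM2l ?chain_distr_ge0.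
Qed.

Lemma expect_path x (es : seq E) h : (forall y, 0 <= h y) ->
  \prod_(e <- es) p e * h (foldl (fun y e => f e y) x es) <= expect x (size es) h.
Proof.
move=> h_ge0; elim: es x => [|e es IHes] x; first by rewrite big_nil mul1r expect0.
rewrite big_cons -mulrA /= -add1n expectD expect1 (bigD1 e) //=.
rewrite ler_wpDr ?sumr_ge0 // => [e' _|]; first by rewrite mulr_ge0 ?expect_ge0.
by rewrite ler_wpM2l.
Qed.

Hypothesis p_sum1 : \sum_(e : E) p e = 1.

Lemma expect_cst x t c : expect x t (fun=> c) = c.
Proof.
elim: t => [|t IHt]; first by rewrite expect0.
by rewrite expectS -[RHS]IHt; apply: eq_expect => y; rewrite -mulr_suml p_sum1 mul1r.
Qed.

Lemma expect_affine x t a b h :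
  expect x t (fun y => b + a * h y) = b + a * expect x t h.
Proof.
rewrite -[b in RHS](expect_cst x t) /expect mulr_sumr -big_split /=.
by apply: eq_bigr => y _; rewrite mulrDr mulrCA.
Qed.

Lemma expect_indicator_le1 (P : pred T) x t : expect x t (fun y => (P y)%:R) <= 1.
Proof.
rewrite -[X in _ <= X](expect_cst x t 1).
by apply: ler_expect => y; rewrite lern1 leq_b1.
Qed.

Section AbsorbingSet.
Variable P : pred T.
Hypothesis closedP : forall e y, P y -> P (f e y).

Lemma expect_absorbing_nondecreasing x :
  nondecreasing_seq (fun t => expect x t (fun y => (P y)%:R)).
Proof.
apply/nondecreasing_seqP => t /=; rewrite expectS; apply: ler_expect => y.
rewrite -[X in X <= _]mul1r -[X in X * _ <= _]p_sum1 mulr_suml.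
apply: ler_sum => e _; rewrite ler_wpM2l //.
by case: (boolP (P y)) => [/(closedP e)->|_]; rewrite ?lexx ?ler0n.
Qed.

Lemma expect_absorbed x t : P x -> expect x t (fun y => (P y)%:R) = 1.
Proof.
move=> Px; apply/le_anti; rewrite expect_indicator_le1 /=.
by have := expect_absorbing_nondecreasing x (leq0n t); rewrite /= expect0 Px.
Qed.

End AbsorbingSet.

End RandomMapChain.

Lemma expect_intertwine (R : realType) (E T U : finType) (p : E -> R)
    (f : E -> T -> T) (g : E -> U -> U) (phi : T -> U) :
  (forall e x, g e (phi x) = phi (f e x)) ->
  forall x t h, expect p g (phi x) t h = expect p f x t (h \o phi).
Proof.
move=> fg x t; elim: t => [|t IHt] h; first by rewrite !expect0.
rewrite !expectS IHt; apply: eq_expect => y /=.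
by apply: eq_bigr => e _; rewrite fg.
Qed.

Lemma nondecreasing_cvg_geometric (R : realType) (u : R ^nat) (l r : R) (n : nat) :
  nondecreasing_seq u -> (forall t, u t <= l) -> 0 <= r < 1 ->
  (forall k, l - r ^+ k <= u (k * n)%N) -> u @ \oo --> l.
Proof.
move=> nd_u le_ul /andP[r_ge0 r_lt1] geom_u.
have cvg_u : cvgn u by apply: nondecreasing_is_cvgn nd_u _; exists l => _ [t _ <-].
suff -> : l = limn u by [].
apply/eqP; rewrite eq_le; apply/andP; split; last first.
  by apply: limr_le cvg_u _; near=> t; apply: le_ul.
have cvg_geom : (fun k => l - r ^+ k) @ \oo --> l.
  rewrite -[X in _ --> X]subr0; apply: cvgB; first exact: cvg_cst.
  by apply: cvg_expr; rewrite ger0_norm.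
rewrite -(cvg_lim _ cvg_geom) //; apply: limr_le; first exact: cvgP cvg_geom.
by near=> k; apply: le_trans (geom_u k) (nondecreasing_cvgn_le nd_u cvg_u _).
Unshelve. all: by end_near.
Qed.

Section Ancestry.
Variable N : nat.

(* An ancestor map A sends each site j to the site at time 0 whose type j carries. *)
Definition inherit (e : event N) (A : {ffun 'I_N -> 'I_N}) : {ffun 'I_N -> 'I_N} :=
  [ffun i => if i \in e.1 then A (e.2 i) else A i].

Definition inherited (s : state N) (A : {ffun 'I_N -> 'I_N}) : state N :=
  [ffun j => s (A j)].

Lemma apply_event_inherited e s A :
  apply_event e (inherited s A) = inherited s (inherit e A).
Proof. by apply/ffunP => i; rewrite !ffunE; case: ifP. Qed.

Lemma foldl_apply_event_inherited es s A :
  foldl (fun s e => apply_event e s) (inherited s A) es =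
  inherited s (foldl (fun A e => inherit e A) A es).
Proof. by elim: es A => [|e es IHes] A //=; rewrite apply_event_inherited IHes. Qed.

Lemma inherited_id s : inherited s [ffun j => j] = s.
Proof. by apply/ffunP => j; rewrite !ffunE. Qed.

Definition lineage_in (S : {set 'I_N}) (A : {ffun 'I_N -> 'I_N}) : bool :=
  [forall j, A j \in S].

Definition coalesced (A : {ffun 'I_N -> 'I_N}) : bool :=
  [exists k, lineage_in [set k] A].

Lemma lineage_in_inherit S e A : lineage_in S A -> lineage_in S (inherit e A).
Proof. by move=> /forallP AS; apply/forallP => i; rewrite ffunE; case: ifP. Qed.

Lemma coalesced_inherit e A : coalesced A -> coalesced (inherit e A).
Proof. by move=> /existsP[k Ak]; apply/existsP; exists k; apply: lineage_in_inherit. Qed.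

Lemma inherited_init_state S A :
  (inherited (init_state S) A == allM N) = lineage_in S A.
Proof.
apply/eqP/forallP => [AS j | AS]; last by apply/ffunP => j; rewrite !ffunE AS.
by have := congr1 (fun s : state N => s j) AS; rewrite !ffunE.
Qed.

Lemma lineage_in_const S (A : {ffun 'I_N -> 'I_N}) k :
  (forall j, A j = k) -> lineage_in S A = (k \in S).
Proof. by move=> Ak; apply/forallP/idP => [/(_ k)|kS j]; rewrite Ak. Qed.

Lemma lineage_in_defect (R : numDomainType) S A :
  `|(lineage_in S A)%:R - \sum_(i in S) (lineage_in [set i] A)%:R|
    <= 1 - (coalesced A)%:R :> R.
Proof.
case: (boolP (coalesced A)) => [/existsP[k /forallP Ak] | not_coal]; last first.
  rewrite big1 ?subr0 ?ger0_norm ?lern1 ?leq_b1 // => i _.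
  apply/eqP; rewrite pnatr_eq0 eqb0; apply: contra not_coal => Ai.
  by apply/existsP; exists i.
have {}Ak j : A j = k by have := Ak j; rewrite inE => /eqP.
rewrite (lineage_in_const _ Ak) (eq_bigr (fun i => (k == i)%:R)) => [|i _]; last first.
  by rewrite (lineage_in_const _ Ak) inE.
case: (boolP (k \in S)) => kS; last first.
  by rewrite big1 ?subrr ?normr0 // => i iS; case: eqP => // ki; rewrite ki iS in kS.
rewrite (bigD1 k) //= eqxx big1 ?addr0 ?subrr ?normr0 // => i /andP[_].
by rewrite eq_sym => /negbTE->.
Qed.

Lemma fixation_coalesces (R : realType) (p : event N -> R) :
  fixation_assumption p -> exists es, all (fun e => 0 < p e) es /\
    forall A, coalesced (foldl (fun A e => inherit e A) A es).
Proof.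
move=> [i [es [pos_es fix_es]]]; exists es; split => // A.
apply/existsP; exists (A i); apply/forallP => j.
have := congr1 (fun s : state N => s j) (fix_es (inherited (init_state [set A i]) A)).
by rewrite foldl_apply_event_inherited !ffunE set11 => ->.
Qed.

End Ancestry.

Lemma distr_chain_distr (R : realType) N (p : event N -> R) s0 t s :
  distr p s0 t s = chain_distr p (@apply_event N) s0 t s.
Proof. by elim: t s => //= t IHt s; apply: eq_bigr => s' _; rewrite IHt. Qed.

Section NeutralFixation.
Variables (R : realType) (N : nat) (p : event N -> R).
Hypothesis rule_p : replacement_rule p.

Let p_ge0 : forall e, 0 <= p e. Proof. by case: rule_p. Qed.
Let p_sum1 : \sum_e p e = 1. Proof. by case: rule_p. Qed.

Local Notation ancestral := (expect p (@inherit N) [ffun j => j]).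

Lemma fixprobE S t : fixprob_seq p S t = ancestral t (fun A => (lineage_in S A)%:R).
Proof.
rewrite /fixprob_seq distr_chain_distr -expect_eq1 -[init_state S]inherited_id.
rewrite (expect_intertwine _ (fun e A => apply_event_inherited e _ A)).
by apply: eq_expect => A /=; rewrite inherited_init_state.
Qed.

Lemma fixprob_cvg S : cvgn (fixprob_seq p S).
Proof.
have -> : fixprob_seq p S = fun t => ancestral t (fun A => (lineage_in S A)%:R).
  by apply/funext => t; rewrite fixprobE.
apply: nondecreasing_is_cvgn; first exact/expect_absorbing_nondecreasing/lineage_in_inherit.
by exists 1 => _ [t _ <-]; apply: expect_indicator_le1.
Qed.

Lemma fixprob_setT t : fixprob_seq p [set: 'I_N] t = 1.
Proof.
rewrite fixprobE -[RHS](expect_cst (@inherit N) p_sum1 [ffun j => j] t 1); apply: eq_expect => A.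
suff -> : lineage_in [set: 'I_N] A by [].
by apply/forallP => j; rewrite inE.
Qed.

Hypothesis fix_p : fixation_assumption p.

Lemma coalescence_cvg : (fun t => ancestral t (fun A => (coalesced A)%:R)) @ \oo --> (1 : R).
Proof.
have [es [pos_es coal_es]] := fixation_coalesces fix_p.
set q := \prod_(e <- es) p e.
have q_gt0 : 0 < q by rewrite /q big_seq prodr_gt0 // => e /(allP pos_es).
have q_le1 : q <= 1.
  rewrite /q big_seq prodr_ile1 // => e _; rewrite p_ge0 /= -p_sum1 (bigD1 e) //=.
  by rewrite lerDl sumr_ge0.
have coal_after A : q + (1 - q) * (coalesced A)%:R <=
    expect p (@inherit N) A (size es) (fun A => (coalesced A)%:R).
  case: (boolP (coalesced A)) => coalA.
    by rewrite expect_absorbed //; [rewrite mulr1 addrC subrK|exact: coalesced_inherit].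
  have := expect_path (@inherit N) p_ge0 A es (fun A => ler0n _ (coalesced A)).
  by rewrite coal_es mulr1 mulr0 addr0.
apply: (@nondecreasing_cvg_geometric _ _ _ (1 - q) (size es)).
- exact/expect_absorbing_nondecreasing/coalesced_inherit.
- by move=> t; apply: expect_indicator_le1.
- by rewrite subr_ge0 q_le1 ltrBlDr ltrDl.
elim=> [|k IHk]; first by rewrite subrr expect_ge0.
rewrite mulSnr expectD; apply: le_trans (ler_expect (@inherit N) p_ge0 _ _ coal_after).
rewrite expect_affine //; apply: le_trans (_ : q + (1 - q) * (1 - (1 - q) ^+ k) <= _).
  by rewrite mulrBr mulr1 addrA [q + _]addrC subrK exprS.
by rewrite lerD2l ler_wpM2l // subr_ge0.
Qed.

Lemma fixprob_defect_cvg S :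
  (fun t => fixprob_seq p S t - \sum_(i in S) fixprob_seq p [set i] t) @ \oo --> 0.
Proof.
pose c t := ancestral t (fun A => (coalesced A)%:R).
have defect_le t :
    `|fixprob_seq p S t - \sum_(i in S) fixprob_seq p [set i] t| <= 1 - c t.
  rewrite fixprobE; under eq_bigr do rewrite fixprobE.
  rewrite -expect_sum -expectB.
  rewrite -[X in _ <= X - _](expect_cst (@inherit N) p_sum1 [ffun j => j] t) -expectB.
  by apply: ler_norm_expect => // A; exact: lineage_in_defect.
have cvg_c : (fun t => 1 - c t) @ \oo --> 0.
  by rewrite -(subrr 1); apply: cvgB; [exact: cvg_cst|exact: coalescence_cvg].
apply: (squeeze_cvgr (f := fun t => - (1 - c t)) (h := fun t => 1 - c t)) => //.
- by near=> t; rewrite -ler_norml defect_le.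
- by rewrite -oppr0; apply: cvgN.
Unshelve. all: by end_near.
Qed.

End NeutralFixation.

Theorem mainTheorem6 (R : realType) (N : nat) (p : event N -> R) :
  replacement_rule p -> fixation_assumption p ->
  exists rho : 'I_N -> R,
    (forall i : 'I_N, fixprob_seq p [set i] @ \oo --> rho i) /\
    (forall S : {set 'I_N}, fixprob_seq p S @ \oo --> \sum_(i in S) rho i) /\
    \sum_(i < N) rho i = 1.
Proof.
move=> rule_p fix_p.
pose rho i := limn (fixprob_seq p [set i]).
have cvg_rho i : fixprob_seq p [set i] @ \oo --> rho i by exact: fixprob_cvg.
have cvg_S S : fixprob_seq p S @ \oo --> \sum_(i in S) rho i.
  have -> : fixprob_seq p S = fun t =>
      (fixprob_seq p S t - \sum_(i in S) fixprob_seq p [set i] t) +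
      \sum_(i in S) fixprob_seq p [set i] t by apply/funext => t; rewrite subrK.
  rewrite -[X in _ --> X]add0r; apply: cvgD; first exact: fixprob_defect_cvg.
  by apply: cvg_big => [|i _]; [exact: add_continuous|exact: cvg_rho].
exists rho; split => //; split => //.
have cvg_1 : fixprob_seq p [set: 'I_N] @ \oo --> (1 : R).
  rewrite (_ : fixprob_seq p _ = fun=> 1); first exact: cvg_cst.
  by apply/funext => t; rewrite fixprob_setT.
rewrite -(cvg_unique _ (cvg_S [set: 'I_N]%SET) cvg_1); last exact: norm_hausdorff.
by apply: eq_bigl => i; rewrite inE.
Qed.
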